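(* The $\mathbf{k}$-linear map $\mathrm{WCQSym}\to \mathbf 1_{\mathbf k}\otimes \text{Ш}^+(x)\subseteq \text{Ш}(x)$, $M_\alpha\mapsto 1\otimes x^{\otimes\theta(\alpha)}$, is an algebra isomorphism; in particular $\mathrm{WCQSym}$ is isomorphic as an algebra to $\text{Ш}^+(x)$ (via $M_\alpha\mapsto x^{\otimes\theta(\alpha)}$) and to the subalgebra $\mathbf 1_{\mathbf k}\otimes\text{Ш}^+(x)$ of the free commutative unitary Rota--Baxter algebra $\text{Ш}(x)$ of weight $1$ generated by $x$. Moreover, $\mathrm{QSym}$ is (via this map) a subalgebra of $\text{Ш}(x)$, and $\mathrm{QSym}$ is a quotient Hopf algebra of $\mathbf 1_{\mathbf k}\otimes\text{Ш}^+(x)$ (endowed with the Hopf algebra structure transported from $\mathrm{WCQSym}$).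
   Context: $\mathbf{k}$ is a commutative ring containing $\mathbb{Q}$. $\tilde{\mathbb N}=\mathbb N\cup\{\varepsilon\}$ with $0+\varepsilon=\varepsilon+\varepsilon=\varepsilon$ and $n+\varepsilon=n$ for integers $n\ge1$. $\mathbf{k}[[X]]_{\tilde{\mathbb N}}$, for $X=\{x_1<x_2<\cdots\}$, is the algebra of possibly infinite linear combinations of formal monomials $\prod x_i^{f(x_i)}$ with $f$ finitely supported $\tilde{\mathbb N}$-valued, multiplied by adding exponents in $\tilde{\mathbb N}$. An $\tilde{\mathbb N}$-composition is a finite (possibly empty) sequence $\alpha=(\alpha_1,\dots,\alpha_k)$ of elements of $\{\varepsilon,1,2,\dots\}$; $M_\alpha=\sum_{1\le i_1<\cdots<i_k}x_{i_1}^{\alpha_1}\cdots x_{i_k}^{\alpha_k}$, $M_\emptyset=1$. $\mathrm{WCQSym}$ is the $\mathbf k$-span of the (linearly independent) $M_\alpha$; it is a Hopf algebra with the power series product, coproduct $\Delta(M_{(\alpha_1,\dots,\alpha_k)})=\sum_{i=0}^kM_{(\alpha_1,\dots,\alpha_i)}\otimes M_{(\alpha_{i+1},\dots,\alpha_k)}$, counit $\epsilon(M_\alpha)=\delta_{\alpha,\emptyset}$. $\mathrm{QSym}\subseteq\mathrm{WCQSym}$ is the span of $M_\alpha$ with all entries of $\alpha$ positive integers (the usual quasi-symmetric functions, with the same coproduct and counit). $\theta$ sends an $\tilde{\mathbb N}$-composition to the weak composition obtained by replacing each entry $\varepsilon$ by $0$. For a weak composition $\gamma=(\gamma_1,\dots,\gamma_k)$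 (sequence of nonnegative integers), $x^{\otimes\gamma}=x^{\gamma_1}\otimes\cdots\otimes x^{\gamma_k}\in\mathbf k[x]^{\otimes k}$, with $x^{\otimes\emptyset}=1\in\mathbf k$. $\text{Ш}^+(x)=\bigoplus_{k\ge0}\mathbf k[x]^{\otimes k}$ with the mixable shuffle product of weight $1$: $1*\mathfrak a=\mathfrak a*1=\mathfrak a$ and $(a_1\otimes\mathfrak a')*(b_1\otimes\mathfrak b')=a_1\otimes(\mathfrak a'*(b_1\otimes\mathfrak b'))+b_1\otimes((a_1\otimes\mathfrak a')*\mathfrak b')+(a_1b_1)\otimes(\mathfrak a'*\mathfrak b')$. $\text{Ш}(x)=\mathbf k[x]\otimes\text{Ш}^+(x)=\bigoplus_{k\ge1}\mathbf k[x]^{\otimes k}$ with product $(a_0\otimes\mathfrak a)\diamond(b_0\otimes\mathfrak b)=(a_0b_0)\otimes(\mathfrak a*\mathfrak b)$ and operator $P(\mathfrak a)=1\otimes\mathfrak a$; it is known to be the free commutative unitary Rota--Baxter algebra of weight $1$ on $x$. *)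

From HB Require Import structures.
From mathcomp Require Import all_boot all_order all_algebra.
Set Implicit Arguments. Unset Strict Implicit. Unset Printing Implicit Defensive.
Import GRing.Theory.
Local Open Scope ring_scope.

(** * Conventions
   - An element of Ñ = N ∪ {ε} is encoded as [option nat]:
     [None] = ε, [Some n] = the integer n (so [Some 0] = 0).
   - An Ñ-composition is a [seq (option nat)] whose entries are ε or positive
     integers (predicate [ncomp]); a positive composition (QSym index) has only
     positive integer entries ([pcomp]); a weak composition is a [seq nat].
   - A formal monomial  prod_i x_{i+1}^{s_i}  of k[[X]]_Ñ is represented by a
     finite sequence [s : seq (option nat)] (exponent of x_1, x_2, ...);
     trailing zeros [Some 0] are irrelevant.  A power series is a coefficient
     function [seq (option nat) -> k]; all series below are invariant under
     padding by zeros.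
   - Elements of WCQSym (= k-span of the M_alpha) are given by formal
     k-linear combinations [seq (k * seq (option nat))] of Ñ-compositions,
     realised as power series by [real]; equality in WCQSym is equality of the
     realised power series.
   - Sh^+(x) = (+)_k k[x]^{(x)k} is the free k-module on the basis
     x^{(x)gamma}, gamma a weak composition; its elements are formal
     combinations [seq (k * seq nat)] compared through [coefSh].
     Sh(x) = k[x] (x) Sh^+(x) has basis x^{(x)(a0::gamma)} (nonempty weak
     compositions), the element 1 (x) x^{(x)gamma} being [0 :: gamma]. *)

Definition tadd (a b : option nat) : option nat :=
  match a, b with
  | Some m, Some n => Some (m + n)%N
  | None, None => None
  | None, Some n | Some n, None => if n == 0%N then None else Some n
  end.

Definition ncomp (al : seq (option nat)) : bool :=
  all (fun e => if e is Some n then (0 < n)%N else true) al.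

Definition pcomp (al : seq (option nat)) : bool :=
  all (fun e => if e is Some n then (0 < n)%N else false) al.

Definition theta (al : seq (option nat)) : seq nat := map (fun e => odflt 0%N e) al.

Definition pser (k : Type) := seq (option nat) -> k.

Definition nzexp (s : seq (option nat)) := [seq e <- s | e != Some 0%N].

(** M_alpha : coefficient 1 exactly on the monomials x_{i1}^{a1}...x_{ik}^{ak}, i1<..<ik *)
Definition Mon (k : nzRingType) (al : seq (option nat)) : pser k :=
  fun s => (nzexp s == al)%:R.

Definition tcand (e : option nat) : seq (option nat) :=
  None :: [seq Some i | i <- iota 0 (odflt 0%N e).+1].
Definition tsplit (e : option nat) : seq (option nat * option nat) :=
  [seq ab <- [seq (a, b) | a <- tcand e, b <- tcand e] | tadd ab.1 ab.2 == e].

Definition decomp (s : seq (option nat)) : seq (seq (option nat) * seq (option nat)) :=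
  foldr (fun e acc => [seq (ab.1 :: t.1, ab.2 :: t.2) | ab <- tsplit e, t <- acc])
        [:: ([::], [::])] s.

Definition psmul (k : nzRingType) (F G : pser k) : pser k :=
  fun s => \sum_(p <- decomp s) F p.1 * G p.2.

Definition real (k : nzRingType) (L : seq (k * seq (option nat))) : pser k :=
  fun s => \sum_(p <- L) p.1 * Mon k p.2 s.

Definition real2 (k : nzRingType) (T : seq (k * (seq (option nat) * seq (option nat))))
  : seq (option nat) -> seq (option nat) -> k :=
  fun s t => \sum_(p <- T) p.1 * Mon k p.2.1 s * Mon k p.2.2 t.

Definition copL (k : nzRingType) (L : seq (k * seq (option nat)))
  : seq (k * (seq (option nat) * seq (option nat))) :=
  flatten [seq [seq (p.1, (take i p.2, drop i p.2)) | i <- iota 0 (size p.2).+1] | p <- L].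

Definition linL (k : nzRingType) (f : seq (option nat) -> seq (k * seq (option nat)))
  (L : seq (k * seq (option nat))) : seq (k * seq (option nat)) :=
  flatten [seq [seq (p.1 * q.1, q.2) | q <- f p.2] | p <- L].

Definition linL2 (k : nzRingType) (f : seq (option nat) -> seq (k * seq (option nat)))
  (T : seq (k * (seq (option nat) * seq (option nat))))
  : seq (k * (seq (option nat) * seq (option nat))) :=
  flatten [seq [seq (p.1 * q1.1 * q2.1, (q1.2, q2.2)) | q1 <- f p.2.1, q2 <- f p.2.2] | p <- T].

Definition coefSh (k : nzRingType) (L : seq (k * seq nat)) (g : seq nat) : k :=
  \sum_(p <- L) (p.2 == g)%:R * p.1.

(** mixable shuffle of weight 1 on basis tensors x^{(x)A} * x^{(x)B}
    (multiset of resulting basis tensors, all with coefficient 1):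
    1 * b = b, a * 1 = a,
    (a1 (x) a') * (b1 (x) b') = a1 (x) (a' * (b1 (x) b')) + b1 (x) ((a1 (x) a') * b')
                                + (a1 b1) (x) (a' * b'),  with x^i x^j = x^(i+j). *)
Fixpoint msh (A B : seq nat) {struct A} : seq (seq nat) :=
  match A with
  | [::] => [:: B]
  | a :: A' =>
      let fix mshA (B : seq nat) : seq (seq nat) :=
        match B with
        | [::] => [:: a :: A']
        | b :: B' => [seq a :: g | g <- msh A' B]
                     ++ [seq b :: g | g <- mshA B']
                     ++ [seq (a + b)%N :: g | g <- msh A' B']
        end in
      mshA B
  end.

Definition shL (k : nzRingType) (L1 L2 : seq (k * seq nat)) : seq (k * seq nat) :=
  flatten [seq [seq (p.1 * q.1, g) | g <- msh p.2 q.2] | p <- L1, q <- L2].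

(** product <> of Sh(x) = k[x] (x) Sh^+(x):
    (a0 (x) a) <> (b0 (x) b) = (a0 b0) (x) (a * b) *)
Definition diam_basis (A B : seq nat) : seq (seq nat) :=
  match A, B with
  | a0 :: A', b0 :: B' => [seq (a0 + b0)%N :: g | g <- msh A' B']
  | _, _ => [::]
  end.
Definition diamL (k : nzRingType) (L1 L2 : seq (k * seq nat)) : seq (k * seq nat) :=
  flatten [seq [seq (p.1 * q.1, g) | g <- diam_basis p.2 q.2] | p <- L1, q <- L2].

Definition phiL (k : nzRingType) (L : seq (k * seq (option nat))) : seq (k * seq nat) :=
  [seq (p.1, 0%N :: theta p.2) | p <- L].
Definition psiL (k : nzRingType) (L : seq (k * seq (option nat))) : seq (k * seq nat) :=
  [seq (p.1, theta p.2) | p <- L].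

Definition oneTensor (k : nzRingType) (G : seq (k * seq nat)) : seq (k * seq nat) :=
  [seq (p.1, 0%N :: p.2) | p <- G].

Definition wcq (k : nzRingType) (L : seq (k * seq (option nat))) : bool :=
  all (fun p => ncomp p.2) L.
Definition qsym (k : nzRingType) (L : seq (k * seq (option nat))) : bool :=
  all (fun p => pcomp p.2) L.

(* Multiplying M_alpha by M_beta in k[[X]]_Ñ gives the sum of the M_gamma,
   gamma running over the quasi-shuffles of alpha and beta in which overlapping
   entries are added in Ñ.  Applied letterwise, theta turns this quasi-shuffle
   into the mixable shuffle of weight 1, and it is a bijection from
   Ñ-compositions onto weak compositions, so M_alpha |-> x^(x)theta(alpha) is an
   algebra isomorphism onto Sh^+(x).
   For the quotient, send M_alpha to 0 if alpha begins with ε and otherwise to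
   (-1)^(number of ε in alpha) M_(alpha with its ε deleted): in a quasi-shuffle
   an ε of one factor either stands alone or is absorbed by an entry of the
   other factor, and these two contributions cancel, which makes the map
   multiplicative; it is comultiplicative because deleting ε commutes with
   deconcatenation. *)

From Pilot Require Import Defs.
From mathcomp Require Import all_boot all_order all_algebra.
From mathcomp Require Import ring.
Set Implicit Arguments. Unset Strict Implicit. Unset Printing Implicit Defensive.
Import GRing.Theory.
Local Open Scope ring_scope.

Fixpoint qsh (A B : seq (option nat)) {struct A} : seq (seq (option nat)) :=
  match A with
  | [::] => [:: B]
  | a :: A' =>
      let fix qshA (B : seq (option nat)) : seq (seq (option nat)) :=
        match B with
        | [::] => [:: a :: A']
        | b :: B' => [seq a :: g | g <- qsh A' B]
                     ++ [seq b :: g | g <- qshA B']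
                     ++ [seq tadd a b :: g | g <- qsh A' B']
        end in
      qshA B
  end.

Lemma qsh0l B : qsh [::] B = [:: B]. Proof. by []. Qed.
Lemma qsh0r A : qsh A [::] = [:: A]. Proof. by case: A. Qed.
Lemma qsh_cons a A b B : qsh (a :: A) (b :: B) =
  [seq a :: g | g <- qsh A (b :: B)] ++ [seq b :: g | g <- qsh (a :: A) B]
  ++ [seq tadd a b :: g | g <- qsh A B].
Proof. by []. Qed.

Lemma msh_cons a A b B : msh (a :: A) (b :: B) =
  [seq a :: g | g <- msh A (b :: B)] ++ [seq b :: g | g <- msh (a :: A) B]
  ++ [seq (a + b)%N :: g | g <- msh A B].
Proof. by []. Qed.

Lemma odflt_tadd a b : odflt 0%N (tadd a b) = (odflt 0%N a + odflt 0%N b)%N.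
Proof. by case: a b => [m|] [n|] //=; case: ifP => [/eqP->|]; rewrite ?addn0. Qed.

Lemma theta_cons a A : theta (a :: A) = odflt 0%N a :: theta A.
Proof. by []. Qed.

Lemma theta_qsh A B : map theta (qsh A B) = msh (theta A) (theta B).
Proof.
elim: A B => [|a A IHA] B //; elim: B => [|b B IHB] //.
rewrite qsh_cons !theta_cons msh_cons -odflt_tadd -theta_cons -IHB.
rewrite -!IHA !map_cat -!map_comp; congr (_ ++ _ ++ _).
Qed.

Lemma all_qsh (P : pred (option nat)) A B :
  (forall a b, P a -> P b -> P (tadd a b)) -> all P A -> all P B -> all (all P) (qsh A B).
Proof.
move=> Ptadd; elim: A B => [|a A IHA] B; first by rewrite /= andbT.
elim: B => [|b B IHB] PaA; first by rewrite qsh0r /= andbT.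
move: (PaA) => /andP[Pa PA] /[dup] PbB /andP[Pb PB].
rewrite qsh_cons !all_cat !all_map; apply/and3P; split; apply/allP => g g_in /=.
- by rewrite Pa (allP (IHA _ PA PbB)).
- by rewrite Pb (allP (IHB PaA PB)).
- by rewrite Ptadd // (allP (IHA _ PA PB)).
Qed.

Lemma ncomp_qsh A B : ncomp A -> ncomp B -> all ncomp (qsh A B).
Proof.
apply: all_qsh => -[m|] [n|] //=; first by rewrite addn_gt0 => ->.
- by move=> m_gt0 _; rewrite gtn_eqF.
- by move=> _ n_gt0; rewrite gtn_eqF.
Qed.

Lemma pcomp_qsh A B : Defs.pcomp A -> Defs.pcomp B -> all Defs.pcomp (qsh A B).
Proof. by apply: all_qsh => -[m|] [n|] //=; rewrite addn_gt0 => ->. Qed.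

Definition thinv (g : seq nat) : seq (option nat) :=
  map (fun n => if n is 0%N then None else Some n) g.

Lemma theta_thinv : cancel thinv theta.
Proof. by elim=> [|[|n] g IH] //=; rewrite IH. Qed.

Lemma ncomp_thinv g : ncomp (thinv g).
Proof. by elim: g => [|[|n] g IH]. Qed.

Lemma thinv_theta : {in ncomp, cancel theta thinv}.
Proof. by elim=> [|[[|n]|] al IH] //; rewrite unfold_in /= => /IH ->. Qed.

Lemma theta_inj : {in ncomp &, injective theta}.
Proof. by move=> al be alC beC eq_theta; rewrite -[al]thinv_theta // eq_theta thinv_theta. Qed.

Lemma ncomp_nzexp s : ncomp (nzexp s).
Proof. by elim: s => [|[[|n]|] s IH]. Qed.

Lemma nzexp_id al : ncomp al -> nzexp al = al.
Proof. by elim: al => [|[[|n]|] al IH] //= /IH ->. Qed.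

Lemma cons0_theta_inj : {in ncomp &, injective (fun al => 0%N :: theta al)}.
Proof. by move=> al be alC beC [/theta_inj->]. Qed.

Lemma tadd0l b : tadd (Some 0%N) b = b. Proof. by case: b. Qed.
Lemma tadd0r a : tadd a (Some 0%N) = a.
Proof. by case: a => [[|m]|] //=; rewrite addn0. Qed.

Lemma tadd_SN n : (0 < n)%N -> tadd (Some n) None = Some n. Proof. by case: n. Qed.
Lemma tadd_NS n : (0 < n)%N -> tadd None (Some n) = Some n. Proof. by case: n. Qed.

Lemma Some_in_tcand m e : (Some m \in tcand e) = (m <= odflt 0 e)%N.
Proof. by rewrite /tcand in_cons orFb (mem_map (@Some_inj _)) mem_iota. Qed.

Lemma mem_tcandl a b : a \in tcand (tadd a b).
Proof. by case: a => [m|]; rewrite ?Some_in_tcand ?odflt_tadd ?leq_addr ?in_cons. Qed.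

Lemma mem_tcandr a b : b \in tcand (tadd a b).
Proof. by case: b => [n|]; rewrite ?Some_in_tcand ?odflt_tadd ?leq_addl ?in_cons. Qed.

Lemma uniq_tcand e : uniq (tcand e).
Proof.
rewrite /tcand cons_uniq (map_inj_uniq (@Some_inj _)) iota_uniq andbT.
by apply/mapP => -[].
Qed.

Lemma mem_tsplit e a b : ((a, b) \in tsplit e) = (tadd a b == e).
Proof.
rewrite mem_filter; case: eqP => [/= <-|//].
exact: (allpairs_f pair (mem_tcandl a b) (mem_tcandr a b)).
Qed.

Lemma uniq_tsplit e : uniq (tsplit e).
Proof. by rewrite filter_uniq // allpairs_uniq ?uniq_tcand // => -[? ?] [? ?]. Qed.

Lemma tsplit0 : tsplit (Some 0%N) = [:: (Some 0%N, Some 0%N)]. Proof. by []. Qed.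

Lemma perm_tsplit_nz e : e != Some 0%N ->
  perm_eq (tsplit e) [:: (Some 0%N, e), (e, Some 0%N)
                       & [seq ab <- tsplit e | (ab.1 != Some 0%N) && (ab.2 != Some 0%N)]].
Proof.
move=> e_nz; apply: uniq_perm; first exact: uniq_tsplit.
  rewrite !cons_uniq in_cons !mem_filter xpair_eqE !eqxx (negbTE e_nz) andbF /=.
  by rewrite filter_uniq ?uniq_tsplit.
move=> [a b]; rewrite mem_tsplit !in_cons mem_filter mem_tsplit !xpair_eqE /=.
case: (eqVneq a (Some 0%N)) => [->|a_nz].
  by rewrite tadd0l [Some 0%N == e]eq_sym (negbTE e_nz) orbF.
case: (eqVneq b (Some 0%N)) => [->|b_nz].
  by rewrite tadd0r andbT orbF.
by rewrite andbF.
Qed.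

Definition drop_eps (w : seq (option nat)) := [seq e <- w | e != None].

Lemma drop_epsS n w : drop_eps (Some n :: w) = Some n :: drop_eps w. Proof. by []. Qed.
Lemma drop_epsN w : drop_eps (None :: w) = drop_eps w. Proof. by []. Qed.

Lemma pcomp_drop_eps al : ncomp al -> Defs.pcomp (drop_eps al).
Proof. by elim: al => [|[[|n]|] al IH] //= /IH. Qed.

Lemma pcomp_ncomp al : Defs.pcomp al -> ncomp al.
Proof. by elim: al => [|[[|n]|] al IH] //= /IH. Qed.

Section Product.
Variable k : comNzRingType.
Implicit Types (F G : pser k) (al be : seq (option nat)).

Lemma sum_pred1_uniq (T : eqType) (r : seq T) (c : T) (F : T -> k) :
  uniq r -> \sum_(a <- r) (a == c)%:R * F a = (c \in r)%:R * F c.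
Proof.
elim: r => [|a r IH] /=; first by rewrite big_nil mul0r.
case/andP=> a_notin_r /IH{}IH; rewrite big_cons IH in_cons.
by case: eqVneq => [<-|_]; rewrite ?(negbTE a_notin_r) /= ?mul0r ?addr0 ?add0r.
Qed.

Lemma big_cat3 (T : Type) (r1 r2 r3 : seq T) (F : T -> k) :
  \sum_(x <- r1 ++ r2 ++ r3) F x = \sum_(x <- r1) F x + \sum_(x <- r2) F x + \sum_(x <- r3) F x.
Proof. by rewrite !big_cat /= addrA. Qed.

Lemma psmul_ext F F' G G' : F =1 F' -> G =1 G' -> psmul F G =1 psmul F' G'.
Proof. by move=> eqF eqG s; apply: eq_bigr => t _; rewrite eqF eqG. Qed.

Lemma psmulZl c F G s : psmul (fun t => c * F t) G s = c * psmul F G s.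
Proof. by rewrite /psmul mulr_sumr; apply: eq_bigr => t _; rewrite mulrA. Qed.

Lemma psmulZr c F G s : psmul F (fun t => c * G t) s = c * psmul F G s.
Proof. by rewrite /psmul mulr_sumr; apply: eq_bigr => t _; rewrite mulrCA. Qed.

Lemma psmul_cons F G e s :
  psmul F G (e :: s) = \sum_(ab <- tsplit e) psmul (F \o cons ab.1) (G \o cons ab.2) s.
Proof. by rewrite /psmul /= big_allpairs_dep. Qed.

Lemma psmul_cons0 F G s :
  psmul F G (Some 0%N :: s) = psmul (F \o cons (Some 0%N)) (G \o cons (Some 0%N)) s.
Proof. by rewrite psmul_cons tsplit0 big_seq1. Qed.

Lemma psmul_cons_nz F G e s : e != Some 0%N ->
  psmul F G (e :: s) =
    psmul (F \o cons (Some 0%N)) (G \o cons e) s + psmul (F \o cons e) (G \o cons (Some 0%N)) s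
    + \sum_(ab <- tsplit e | (ab.1 != Some 0%N) && (ab.2 != Some 0%N))
        psmul (F \o cons ab.1) (G \o cons ab.2) s.
Proof.
move=> e_nz; rewrite psmul_cons.
rewrite (perm_big _ (perm_tsplit_nz e_nz)) !big_cons big_filter.
rewrite -[RHS]addrA; congr (_ + (_ + _)).
Qed.

Lemma Mon_cons0 al : Mon k al \o cons (Some 0%N) =1 Mon k al.
Proof. by move=> t; rewrite /Mon /nzexp /=. Qed.

Lemma Mon_nil_cons a : a != Some 0%N -> Mon k [::] \o cons a =1 (fun _ => 0).
Proof. by move=> a_nz t; rewrite /Mon /nzexp /= a_nz. Qed.

Lemma Mon_cons a0 al a : a != Some 0%N ->
  Mon k (a0 :: al) \o cons a =1 (fun t => (a == a0)%:R * Mon k al t).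
Proof. by move=> a_nz t; rewrite /Mon /nzexp /= a_nz eqseq_cons -mulnb natrM. Qed.

Lemma psmul0l G : psmul (fun _ => 0) G =1 (fun _ => 0).
Proof. by move=> s; apply: big1 => t _; rewrite mul0r. Qed.

Lemma psmul0r F : psmul F (fun _ => 0) =1 (fun _ => 0).
Proof. by move=> s; apply: big1 => t _; rewrite mulr0. Qed.

Lemma psmul1l G : psmul (Mon k [::]) G =1 G.
Proof.
move=> s; elim: s G => [|e s IH] G; first by rewrite /psmul big_seq1 /Mon mul1r.
have [->|e_nz] := eqVneq e (Some 0%N).
  by rewrite psmul_cons0 (psmul_ext (Mon_cons0 _) (frefl _)) IH.
rewrite psmul_cons_nz // (psmul_ext (Mon_cons0 _) (frefl _)) IH.
rewrite (psmul_ext (Mon_nil_cons e_nz) (frefl _)) psmul0l big1 ?addr0 // => ab /andP[a_nz _].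
by rewrite (psmul_ext (Mon_nil_cons a_nz) (frefl _)) psmul0l.
Qed.

Lemma psmul1r F : psmul F (Mon k [::]) =1 F.
Proof.
move=> s; elim: s F => [|e s IH] F; first by rewrite /psmul big_seq1 /Mon mulr1.
have [->|e_nz] := eqVneq e (Some 0%N).
  by rewrite psmul_cons0 (psmul_ext (frefl _) (Mon_cons0 _)) IH.
rewrite psmul_cons_nz // (psmul_ext (frefl _) (Mon_cons0 _)) IH.
rewrite (psmul_ext (frefl _) (Mon_nil_cons e_nz)) psmul0r big1 ?add0r ?addr0 // => ab /andP[_ b_nz].
by rewrite (psmul_ext (frefl _) (Mon_nil_cons b_nz)) psmul0r.
Qed.

Lemma ncomp_head_nz a al : ncomp (a :: al) -> a != Some 0%N.
Proof. by case: a => [[|m]|]. Qed.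

Lemma sum_qsh_Mon_cons_nz a0 al b0 be e s : e != Some 0%N ->
  \sum_(g <- qsh (a0 :: al) (b0 :: be)) Mon k g (e :: s) =
    (e == a0)%:R * \sum_(g <- qsh al (b0 :: be)) Mon k g s
    + (e == b0)%:R * \sum_(g <- qsh (a0 :: al) be) Mon k g s
    + (e == tadd a0 b0)%:R * \sum_(g <- qsh al be) Mon k g s.
Proof.
move=> e_nz; rewrite qsh_cons big_cat3 !big_map !mulr_sumr.
by congr (_ + _ + _); apply: eq_bigr => g _; apply: (Mon_cons _ _ e_nz).
Qed.

Lemma psmul_Mon al be : ncomp al -> ncomp be ->
  psmul (Mon k al) (Mon k be) =1 (fun s => \sum_(g <- qsh al be) Mon k g s).
Proof.
move=> + + s; elim: s al be => [|e s IH] [|a0 al] [|b0 be] alC beC;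
  rewrite ?qsh0l ?qsh0r ?big_seq1 ?psmul1l ?psmul1r //.
  have Mon_nil a g : Mon k (a :: g) [::] = 0 by [].
  rewrite qsh_cons big_cat3 !big_map !big1 ?addr0 // /psmul big_seq1.
  by rewrite Mon_nil mul0r.
have [->|e_nz] := eqVneq e (Some 0%N).
  by rewrite psmul_cons0 (psmul_ext (Mon_cons0 _) (Mon_cons0 _)) IH //.
have a0_nz := ncomp_head_nz alC; have b0_nz := ncomp_head_nz beC.
have /andP[_ alC'] := alC; have /andP[_ beC'] := beC.
rewrite psmul_cons_nz // (psmul_ext (Mon_cons0 _) (Mon_cons _ _ e_nz)) psmulZr.
rewrite (psmul_ext (Mon_cons _ _ e_nz) (Mon_cons0 _)) psmulZl.
under eq_bigr => ab /andP[a_nz b_nz].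
  rewrite (psmul_ext (Mon_cons _ _ a_nz) (Mon_cons _ _ b_nz)) psmulZl psmulZr mulrA.
  rewrite -natrM mulnb -xpair_eqE.
  over.
rewrite -big_filter sum_pred1_uniq; last by rewrite filter_uniq // uniq_tsplit.
rewrite mem_filter mem_tsplit.
rewrite [(_, _).1]/= [(_, _).2]/= a0_nz b0_nz sum_qsh_Mon_cons_nz // !IH //.
by rewrite andTb [X in X + _ = _]addrC ![e == _]eq_sym.
Qed.

End Product.

Section Combinations.
Variable k : comNzRingType.

Definition bilin (A B : Type) (m : A -> A -> seq B) (L1 L2 : seq (k * A)) : seq (k * B) :=
  flatten [seq [seq (p.1 * q.1, g) | g <- m p.2 q.2] | p <- L1, q <- L2].

Definition coef (T : eqType) (L : seq (k * T)) (a : T) : k := \sum_(p <- L) (p.2 == a)%:R * p.1.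

Lemma sum_bilin A B m L1 L2 (Phi : B -> k) :
  \sum_(p <- @bilin A B m L1 L2) p.1 * Phi p.2 =
  \sum_(p <- L1) \sum_(q <- L2) p.1 * q.1 * \sum_(g <- m p.2 q.2) Phi g.
Proof.
rewrite big_flatten /= big_allpairs_dep; apply: eq_bigr => p _; apply: eq_bigr => q _.
by rewrite big_map mulr_sumr.
Qed.

Lemma map_bilin A B A' B' (f : A -> A') (h : B -> B') m m' L1 L2 :
  (forall a b, m' (f a) (f b) = map h (m a b)) ->
  [seq (p.1, h p.2) | p <- @bilin A B m L1 L2] =
  bilin m' [seq (p.1, f p.2) | p <- L1] [seq (p.1, f p.2) | p <- L2].
Proof.
move=> mf; rewrite /bilin map_flatten map_allpairs allpairs_mapl allpairs_mapr.
by congr flatten; apply: eq_allpairs => p q /=; rewrite mf -!map_comp.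
Qed.

Lemma all_bilin (A B : eqType) (P : pred A) (Q : pred B) m L1 L2 :
  (forall a b, P a -> P b -> all Q (m a b)) ->
  all (fun p => P p.2) L1 -> all (fun p => P p.2) L2 ->
  all (fun p => Q p.2) (@bilin A B m L1 L2).
Proof.
move=> mPQ /allP PL1 /allP PL2; apply/allP => x /flattenP[l /allpairsP[[p q] [p_in q_in ->]]].
move=> /mapP[g g_in ->] /=.
exact: (allP (mPQ _ _ (PL1 p p_in) (PL2 q q_in)) g g_in).
Qed.

Lemma sum_coef (T : eqType) (L : seq (k * T)) (S : seq T) (Phi : T -> k) :
  uniq S -> {subset [seq p.2 | p <- L] <= S} ->
  \sum_(p <- L) p.1 * Phi p.2 = \sum_(a <- S) coef L a * Phi a.
Proof.
move=> S_uniq L_sub; under [RHS]eq_bigr do rewrite /coef mulr_suml.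
rewrite exchange_big; apply: eq_big_seq => p p_in /=.
under eq_bigr do rewrite -mulrA eq_sym.
by rewrite sum_pred1_uniq // L_sub ?map_f // mul1r.
Qed.

Lemma eq_sum_coef (T : eqType) (L L' : seq (k * T)) (Phi : T -> k) :
  {in [seq p.2 | p <- L ++ L'], coef L =1 coef L'} ->
  \sum_(p <- L) p.1 * Phi p.2 = \sum_(p <- L') p.1 * Phi p.2.
Proof.
move=> eq_coefs; set S := undup [seq p.2 | p <- L ++ L'].
have S_sub M : {subset M <= L ++ L'} -> {subset [seq p.2 | p <- M] <= S}.
  by move=> sub_M _ /mapP[p /sub_M p_in ->]; rewrite mem_undup map_f.
have L_sub : {subset L <= L ++ L'} by move=> p p_in; rewrite mem_cat p_in.
have L'_sub : {subset L' <= L ++ L'} by move=> p p_in; rewrite mem_cat p_in orbT.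
rewrite (sum_coef Phi (undup_uniq _) (S_sub _ L_sub)).
rewrite (sum_coef Phi (undup_uniq _) (S_sub _ L'_sub)).
by apply: eq_big_seq => a; rewrite mem_undup => /eq_coefs ->.
Qed.

Implicit Types L : seq (k * seq (option nat)).

Lemma realE L s : real L s = coef L (nzexp s).
Proof. by apply: eq_bigr => p _; rewrite /Mon eq_sym mulrC. Qed.

Lemma real_coef L al : ncomp al -> real L al = coef L al.
Proof. by move=> alC; rewrite realE nzexp_id. Qed.

Lemma eq_real_sum (L L' : seq (k * seq (option nat))) (Phi : seq (option nat) -> k) :
  wcq L -> wcq L' -> real L =1 real L' ->
  \sum_(p <- L) p.1 * Phi p.2 = \sum_(p <- L') p.1 * Phi p.2.
Proof.
move=> /allP LC /allP L'C eq_real; apply: eq_sum_coef => a /mapP[p].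
rewrite mem_cat => p_in ->; have pC : ncomp p.2.
  by case/orP: p_in => [/LC|/L'C].
by rewrite -!real_coef.
Qed.

Lemma coef_map (T T' : eqType) (D : {pred T}) (f : T -> T') (L : seq (k * T)) a :
  {in D &, injective f} -> a \in D -> {in L, forall p, p.2 \in D} ->
  coef [seq (p.1, f p.2) | p <- L] (f a) = coef L a.
Proof.
move=> f_inj a_D L_D; rewrite /coef big_map; apply: eq_big_seq => p p_in /=.
by rewrite (inj_in_eq f_inj) ?L_D.
Qed.

Lemma real_eq_map (f : seq (option nat) -> seq nat) (L L' : seq (k * seq (option nat))) :
  {in ncomp &, injective f} -> wcq L -> wcq L' ->
  real L =1 real L' <->
  coefSh [seq (p.1, f p.2) | p <- L] =1 coefSh [seq (p.1, f p.2) | p <- L'].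
Proof.
move=> f_inj LC L'C; split=> [eq_real c|eq_coef s].
  rewrite /coefSh !big_map; under eq_bigr do rewrite mulrC; under [RHS]eq_bigr do rewrite mulrC.
  exact: (eq_real_sum (fun a => (f a == c)%:R)).
have coef_f M : wcq M -> coef M (nzexp s) = coefSh [seq (p.1, f p.2) | p <- M] (f (nzexp s)).
  move=> /allP MC; rewrite -[RHS]/(coef _ _) (coef_map f_inj) //.
  exact: ncomp_nzexp.
by rewrite !realE !coef_f // eq_coef.
Qed.

Lemma wcq_bilin L1 L2 : wcq L1 -> wcq L2 -> wcq (bilin qsh L1 L2).
Proof. exact: all_bilin ncomp_qsh. Qed.

Lemma qsym_bilin L1 L2 : qsym L1 -> qsym L2 -> qsym (bilin qsh L1 L2).
Proof. exact: all_bilin pcomp_qsh. Qed.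

Lemma psmul_real L1 L2 s :
  psmul (real L1) (real L2) s =
  \sum_(p <- L1) \sum_(q <- L2) p.1 * q.1 * psmul (Mon k p.2) (Mon k q.2) s.
Proof.
rewrite /psmul; under eq_bigr do rewrite big_distrlr /=.
rewrite exchange_big /=; apply: eq_bigr => p _; rewrite exchange_big /=.
by apply: eq_bigr => q _; rewrite mulr_sumr; apply: eq_bigr => t _; ring.
Qed.

Lemma real_bilin L1 L2 : wcq L1 -> wcq L2 ->
  real (bilin qsh L1 L2) =1 psmul (real L1) (real L2).
Proof.
move=> /allP L1C /allP L2C s; rewrite /real (sum_bilin _ _ _ (fun g => Mon k g s)) psmul_real.
apply: eq_big_seq => p p_in; apply: eq_big_seq => q q_in.
by rewrite (psmul_Mon _ (L1C _ p_in) (L2C _ q_in)).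
Qed.

Lemma phiL_bilin L1 L2 : phiL (bilin qsh L1 L2) = diamL (phiL L1) (phiL L2).
Proof.
apply: (map_bilin (f := fun al => 0%N :: theta al) (h := fun al => 0%N :: theta al)) => al be.
by rewrite /= -theta_qsh -map_comp.
Qed.

Lemma psiL_bilin L1 L2 : psiL (bilin qsh L1 L2) = shL (psiL L1) (psiL L2).
Proof. by apply: (map_bilin (f := theta) (h := theta)) => al be; rewrite theta_qsh. Qed.

Lemma phiL_oneTensor L : phiL L = oneTensor (psiL L).
Proof. by rewrite /oneTensor /psiL -map_comp. Qed.

Lemma psiL_thinv (G : seq (k * seq nat)) :
  let L := [seq (p.1, thinv p.2) | p <- G] in wcq L /\ psiL L = G.
Proof.
split; first by apply/allP => _ /mapP[p _ ->]; apply: ncomp_thinv.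
by rewrite /psiL -map_comp -[RHS]map_id; apply: eq_map => -[c g] /=; rewrite theta_thinv.
Qed.

End Combinations.

Section Quotient.
Variable k : comNzRingType.
Implicit Types L : seq (k * seq (option nat)).

Definition eps_sign (w : seq (option nat)) : k := (-1) ^+ count_mem None w.

Definition qsign (w : seq (option nat)) : k := if w is None :: _ then 0 else eps_sign w.

Definition piL (al : seq (option nat)) : seq (k * seq (option nat)) :=
  [:: (qsign al, drop_eps al)].

Lemma eps_sign_nil : eps_sign [::] = 1. Proof. by []. Qed.
Lemma eps_signS n w : eps_sign (Some n :: w) = eps_sign w. Proof. by []. Qed.
Lemma eps_signN w : eps_sign (None :: w) = - eps_sign w.
Proof. by rewrite /eps_sign /= exprS mulN1r. Qed.

Lemma qsignS n w : qsign (Some n :: w) = eps_sign w. Proof. by []. Qed.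
Lemma qsignN w : qsign (None :: w) = 0. Proof. by []. Qed.

Lemma sum_eps_signS n (r : seq (seq (option nat))) (f : seq (option nat) -> k) :
  \sum_(w <- [seq Some n :: g | g <- r]) eps_sign w * f (drop_eps w) =
  \sum_(w <- r) eps_sign w * (fun g => f (Some n :: g)) (drop_eps w).
Proof. by rewrite big_map. Qed.

Lemma sum_eps_signN (r : seq (seq (option nat))) (f : seq (option nat) -> k) :
  \sum_(w <- [seq None :: g | g <- r]) eps_sign w * f (drop_eps w) =
  - \sum_(w <- r) eps_sign w * f (drop_eps w).
Proof. by rewrite big_map -sumrN; apply: eq_bigr => w _; rewrite eps_signN mulNr. Qed.

Lemma sum_qsh_eps_sign u v (f : seq (option nat) -> k) : ncomp u -> ncomp v ->
  \sum_(w <- qsh u v) eps_sign w * f (drop_eps w) =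
  eps_sign u * eps_sign v * \sum_(g <- qsh (drop_eps u) (drop_eps v)) f g.
Proof.
have drop_eps_nil : drop_eps [::] = [::] by [].
elim: u v f => [|a u IHu] v f; first by rewrite drop_eps_nil !qsh0l !big_seq1 mul1r.
elim: v f => [|b v IHv] f uC; first by rewrite drop_eps_nil !qsh0r !big_seq1 mulr1.
move=> vC; have /andP[aC u'C] := uC; have /andP[bC v'C] := vC.
rewrite qsh_cons big_cat3.
case: a aC uC IHv => [x|] x_gt0 uC IHv; case: b bC vC => [y|] y_gt0 vC.
- rewrite [tadd _ _]/= !sum_eps_signS (IHu _ (fun g => f (Some x :: g))) //.
  rewrite (IHv (fun g => f (Some y :: g))) // (IHu _ (fun g => f (Some (x + y) :: g))) //.
  by rewrite !drop_epsS qsh_cons big_cat3 !big_map !eps_signS; ring.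
- rewrite tadd_SN // !sum_eps_signS sum_eps_signN (IHu _ (fun g => f (Some x :: g))) //.
  rewrite (IHv f) // (IHu _ (fun g => f (Some x :: g))) //.
  by rewrite !drop_epsS !drop_epsN !eps_signS !eps_signN; ring.
- rewrite tadd_NS // !sum_eps_signS sum_eps_signN (IHu _ f) //.
  rewrite (IHv (fun g => f (Some y :: g))) // (IHu _ (fun g => f (Some y :: g))) //.
  by rewrite !drop_epsS !drop_epsN !eps_signS !eps_signN; ring.
- rewrite [tadd _ _]/= !sum_eps_signN (IHu _ f) // (IHv f) // (IHu _ f) //.
  by rewrite !drop_epsN !eps_signN; ring.
Qed.

Lemma sum_qsignS n (r : seq (seq (option nat))) (f : seq (option nat) -> k) :
  \sum_(w <- [seq Some n :: g | g <- r]) qsign w * f (drop_eps w) =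
  \sum_(w <- r) eps_sign w * (fun g => f (Some n :: g)) (drop_eps w).
Proof. by rewrite big_map. Qed.

Lemma sum_qsignN (r : seq (seq (option nat))) (f : seq (option nat) -> k) :
  \sum_(w <- [seq None :: g | g <- r]) qsign w * f (drop_eps w) = 0.
Proof. by rewrite big_map big1 // => w _; rewrite qsignN mul0r. Qed.

Lemma sum_qsh_qsign u v (f : seq (option nat) -> k) : ncomp u -> ncomp v ->
  \sum_(w <- qsh u v) qsign w * f (drop_eps w) =
  qsign u * qsign v * \sum_(g <- qsh (drop_eps u) (drop_eps v)) f g.
Proof.
have drop_eps_nil : drop_eps [::] = [::] by [].
case: u => [|a u]; first by rewrite drop_eps_nil !qsh0l !big_seq1 mul1r.
case: v => [|b v] uC vC; first by rewrite drop_eps_nil !qsh0r !big_seq1 mulr1.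
have /andP[aC u'C] := uC; have /andP[bC v'C] := vC.
rewrite qsh_cons big_cat3.
case: a aC uC => [x|] x_gt0 uC; case: b bC vC => [y|] y_gt0 vC.
- rewrite [tadd _ _]/= !sum_qsignS (sum_qsh_eps_sign (fun g => f (Some x :: g))) //.
  rewrite (sum_qsh_eps_sign (fun g => f (Some y :: g))) //.
  rewrite (sum_qsh_eps_sign (fun g => f (Some (x + y) :: g))) //.
  by rewrite !drop_epsS qsh_cons big_cat3 !big_map !eps_signS !qsignS; ring.
- rewrite tadd_SN // !sum_qsignS sum_qsignN !(sum_qsh_eps_sign (fun g => f (Some x :: g))) //.
  by rewrite !drop_epsN !eps_signN qsignN; ring.
- rewrite tadd_NS // !sum_qsignS sum_qsignN !(sum_qsh_eps_sign (fun g => f (Some y :: g))) //.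
  by rewrite !drop_epsN !eps_signN qsignN; ring.
- by rewrite [tadd _ _]/= !sum_qsignN qsignN !addr0 !mul0r.
Qed.

Lemma sum_take_drop_eps_sign al (F : seq (option nat) -> seq (option nat) -> k) :
  \sum_(0 <= i < (size al).+1)
     eps_sign (take i al) * qsign (drop i al) * F (drop_eps (take i al)) (drop_eps (drop i al)) =
  eps_sign al * \sum_(0 <= j < (size (drop_eps al)).+1)
     F (take j (drop_eps al)) (drop j (drop_eps al)).
Proof.
elim: al F => [|a al IH] F; first by rewrite !big_nat1 mul1r.
rewrite big_nat_recl // take0 drop0 eps_sign_nil mul1r.
under eq_bigr do rewrite [take _ _]/= [drop _ _]/=.
case: a => [m|].
- rewrite (IH (fun x y => F (Some m :: x) y)) drop_epsS eps_signS qsignS /=.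
  by rewrite [in RHS]big_nat_recl // mulrDr.
- under eq_bigr do rewrite eps_signN drop_epsN !mulNr.
  by rewrite sumrN IH qsignN drop_epsN eps_signN mul0r add0r mulNr.
Qed.

Lemma sum_take_drop_qsign al (F : seq (option nat) -> seq (option nat) -> k) :
  \sum_(0 <= i < (size al).+1)
     qsign (take i al) * qsign (drop i al) * F (drop_eps (take i al)) (drop_eps (drop i al)) =
  qsign al * \sum_(0 <= j < (size (drop_eps al)).+1)
     F (take j (drop_eps al)) (drop j (drop_eps al)).
Proof.
case: al => [|[m|] al]; first by rewrite !big_nat1 mul1r.
- rewrite qsignS -(eps_signS m) -sum_take_drop_eps_sign.
  by apply: eq_bigr => -[|i] _.
- rewrite qsignN mul0r big1 // => -[|i] _; first by rewrite drop0 qsignN mulr0 mul0r.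
  by rewrite [take _ _]/= qsignN !mul0r.
Qed.

Lemma real_piL al s : real (piL al) s = qsign al * Mon k (drop_eps al) s.
Proof. by rewrite /real big_seq1. Qed.

Lemma real_linL (f : seq (option nat) -> seq (k * seq (option nat))) L s :
  real (linL f L) s = \sum_(p <- L) p.1 * real (f p.2) s.
Proof.
rewrite /real /linL big_flatten /= big_map; apply: eq_bigr => p _.
by rewrite big_map mulr_sumr; apply: eq_bigr => q _; rewrite mulrA.
Qed.

Lemma qsym_piL al : ncomp al -> qsym (piL al).
Proof. by move=> alC; rewrite /qsym /= pcomp_drop_eps. Qed.

Lemma real_piL_pcomp al : Defs.pcomp al -> real (piL al) =1 Mon k al.
Proof.
move=> alP s; rewrite real_piL.
have -> : drop_eps al = al by elim: al alP => [|[[|n]|] al IH] //= /IH ->.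
suff -> : qsign al = 1 by rewrite mul1r.
case: al alP => [|[n|] al] //= /andP[_]; rewrite eps_signS /eps_sign.
by elim: al => [|[[|m]|] al IH] //= /IH.
Qed.

Lemma real_piL_nil al : ncomp al -> real (piL al) [::] = (al == [::])%:R.
Proof.
by rewrite real_piL; case: al => [|[[|n]|] al] // _; rewrite ?qsignN /Mon /= ?mulr0 ?mul0r ?mulr1.
Qed.

Lemma real_piL_mul al be L : ncomp al -> ncomp be -> wcq L ->
  real L =1 psmul (Mon k al) (Mon k be) ->
  real (linL piL L) =1 psmul (real (piL al)) (real (piL be)).
Proof.
move=> alC beC LC eq_real s; set L0 := bilin qsh [:: (1 : k, al)] [:: (1 : k, be)].
have L0C : wcq L0 by apply: wcq_bilin; rewrite /wcq /= andbT.
have eq_real0 : real L =1 real L0.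
  move=> t; rewrite eq_real real_bilin ?/wcq /= ?alC ?beC //.
  by apply: psmul_ext => u; rewrite /real big_seq1 mul1r.
rewrite real_linL (eq_real_sum (fun a => real (piL a) s) LC L0C eq_real0).
rewrite (sum_bilin _ _ _ (fun a => real (piL a) s)) !big_seq1 !mul1r.
under eq_bigr do rewrite real_piL.
rewrite (sum_qsh_qsign (fun w => Mon k w s)) // -psmul_Mon ?pcomp_ncomp ?pcomp_drop_eps //.
by rewrite (psmul_ext (real_piL al) (real_piL be)) psmulZl psmulZr mulrA.
Qed.

Lemma copL1 (c : k) al :
  copL [:: (c, al)] = [seq (c, (take i al, drop i al)) | i <- iota 0 (size al).+1].
Proof. by rewrite /copL /= cats0. Qed.

Lemma real2_linL2_piL T x y :
  real2 (linL2 piL T) x y =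
  \sum_(p <- T) p.1 * (qsign p.2.1 * qsign p.2.2)
                    * (Mon k (drop_eps p.2.1) x * Mon k (drop_eps p.2.2) y).
Proof.
rewrite /real2 /linL2 big_flatten /= big_map; apply: eq_bigr => p _.
by rewrite big_seq1 /=; ring.
Qed.

Lemma real2_piL_comult al :
  real2 (linL2 piL (copL [:: (1, al)])) =2 real2 (copL (piL al)).
Proof.
have iota0 n : iota 0 n = index_iota 0 n by rewrite /index_iota subn0.
move=> x y; rewrite real2_linL2_piL /piL !copL1 /real2 !big_map !iota0.
under eq_bigr do rewrite mul1r /=.
have := sum_take_drop_qsign al (fun u v => Mon k u x * Mon k v y) => /= ->.
by rewrite mulr_sumr; apply: eq_bigr => j _; rewrite mulrA.
Qed.

End Quotient.

Unset Implicit Arguments.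

Theorem theorem4p5 (k : comUnitRingType)
  (hQ : forall n : nat, (n.+1)%:R \is a @GRing.unit k) :
  (* (1) M_alpha |-> 1 (x) x^{(x)theta(alpha)} is a well-defined injective
         k-linear map WCQSym -> Sh(x) ... *)
  (forall L L' : seq (k * seq (option nat)), wcq L -> wcq L' ->
     (real L =1 real L' <-> coefSh (phiL L) =1 coefSh (phiL L')))
  (* ... whose image is exactly 1 (x) Sh^+(x) ... *)
  /\ (forall G : seq (k * seq nat),
        exists L : seq (k * seq (option nat)), wcq L /\ coefSh (phiL L) =1 coefSh (oneTensor G))
  (* ... which is unital ... *)
  /\ coefSh (phiL [:: (1 : k, [::])]) =1 coefSh [:: (1 : k, [:: 0%N])]
  (* ... and multiplicative (power-series product vs. <> in Sh(x)) *)
  /\ (forall L1 L2 : seq (k * seq (option nat)), wcq L1 -> wcq L2 ->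
        exists L : seq (k * seq (option nat)), wcq L /\ real L =1 psmul (real L1) (real L2)
                  /\ coefSh (phiL L) =1 coefSh (diamL (phiL L1) (phiL L2)))
  (* (2) in particular M_alpha |-> x^{(x)theta(alpha)} : WCQSym -> Sh^+(x)
         is an algebra isomorphism *)
  /\ (forall L L' : seq (k * seq (option nat)), wcq L -> wcq L' ->
        (real L =1 real L' <-> coefSh (psiL L) =1 coefSh (psiL L')))
  /\ (forall G : seq (k * seq nat),
        exists L : seq (k * seq (option nat)), wcq L /\ coefSh (psiL L) =1 coefSh G)
  /\ coefSh (psiL [:: (1 : k, [::])]) =1 coefSh [:: (1 : k, [::])]
  /\ (forall L1 L2 : seq (k * seq (option nat)), wcq L1 -> wcq L2 ->
        exists L : seq (k * seq (option nat)), wcq L /\ real L =1 psmul (real L1) (real L2)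
                  /\ coefSh (psiL L) =1 coefSh (shL (psiL L1) (psiL L2)))
  (* (3) the image of QSym is a subalgebra of Sh(x) *)
  /\ (exists L : seq (k * seq (option nat)), qsym L /\ coefSh (phiL L) =1 coefSh [:: (1 : k, [:: 0%N])])
  /\ (forall L1 L2 : seq (k * seq (option nat)), qsym L1 -> qsym L2 ->
        exists L : seq (k * seq (option nat)), qsym L /\ coefSh (phiL L) =1 coefSh (diamL (phiL L1) (phiL L2)))
  (* (4) QSym is a quotient Hopf algebra of 1 (x) Sh^+(x) ~ WCQSym (transported
         structure): there is a surjective Hopf algebra morphism pi, given on the
         basis M_alpha ~ 1 (x) x^{(x)theta(alpha)}, with values in QSym *)
  /\ (exists pi : seq (option nat) -> seq (k * seq (option nat)),
        (forall al : seq (option nat), ncomp al -> qsym (pi al))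
        (* surjective onto QSym *)
        /\ (forall Q : seq (k * seq (option nat)), qsym Q -> exists L : seq (k * seq (option nat)), wcq L /\ real (linL pi L) =1 real Q)
        (* unital and multiplicative *)
        /\ real (pi [::]) =1 Mon k [::]
        /\ (forall (al be : seq (option nat)) (L : seq (k * seq (option nat))), ncomp al -> ncomp be -> wcq L ->
              real L =1 psmul (Mon k al) (Mon k be) ->
              real (linL pi L) =1 psmul (real (pi al)) (real (pi be)))
        (* counital and comultiplicative *)
        /\ (forall al : seq (option nat), ncomp al -> real (pi al) [::] = (al == [::])%:R)
        /\ (forall al : seq (option nat), ncomp al ->
              real2 (linL2 pi (copL [:: (1 : k, al)])) =2 real2 (copL (pi al)))).
Proof.
split; first by move=> L L'; apply: real_eq_map cons0_theta_inj.
split.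
  move=> G; have [LC LG] := psiL_thinv G.
  by exists [seq (p.1, thinv p.2) | p <- G]; rewrite phiL_oneTensor LG.
split; first by [].
split.
  move=> L1 L2 L1C L2C; exists (bilin qsh L1 L2); rewrite phiL_bilin wcq_bilin //.
  by split=> //; split=> //; apply: real_bilin.
split; first by move=> L L'; apply: real_eq_map theta_inj.
split; first by move=> G; have [LC LG] := psiL_thinv G; exists [seq (p.1, thinv p.2) | p <- G]; rewrite LG.
split; first by [].
split.
  move=> L1 L2 L1C L2C; exists (bilin qsh L1 L2); rewrite psiL_bilin wcq_bilin //.
  by split=> //; split=> //; apply: real_bilin.
split; first by exists [:: (1, [::])].
split; first by move=> L1 L2 L1Q L2Q; exists (bilin qsh L1 L2); rewrite phiL_bilin qsym_bilin.
exists (piL k); split; first exact: qsym_piL.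
split.
  move=> Q QQ; exists Q; split; first by apply: sub_all QQ => p /pcomp_ncomp.
  by move=> s; rewrite real_linL; apply: eq_big_seq => p /(allP QQ) /real_piL_pcomp ->.
split; first exact: real_piL_pcomp.
split; first exact: real_piL_mul.
split; first exact: real_piL_nil.
by move=> al _; apply: real2_piL_comult.
Qed.
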